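(* Let $p$ be a prime and $G$ a finite Abelian $p$-group. For each non-cyclic subgroup $G'\le G$ choose a subgroup $L'<G'$ with $G'/L'\cong C_p\times C_p$. For each such $G'$ and each homomorphism $\rho:G'\to C_p$ (trivial or not) put $$\Theta_{G',\rho}=L'\times\rho|_{L'}-\sum_{L'<C'<G',\ [C':L']=p} C'\times\rho|_{C'}+p\,(G'\times\rho)\in B(G\times C_p).$$ Then $K(G,C_p)[\tfrac1p]=\mathbb Z[\tfrac1p]\otimes K(G,C_p)$ is a free $\mathbb Z[\tfrac1p]$-module with basis the elements $\Theta_{G',\rho}$, where $G'$ ranges over the non-cyclic subgroups of $G$ and $\rho$ over all homomorphisms $G'\to C_p$. In particular $\operatorname{rank}K(G,C_p)$ equals the number of such pairs $(G',\rho)$.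
   Context: $B(G\times C_p)$ is the Burnside ring of the Abelian group $G\times C_p$, free Abelian with basis its subgroups. For $K\le G$ and a homomorphism $\rho:K\to C_p$, $K\times\rho=\{(k,\rho(k)):k\in K\}$ is its graph. $B(G,C_p)\subset B(G\times C_p)$ is spanned by all graphs. $f:B(G\times C_p)\to R_{\mathbb Q}(G\times C_p)$ sends a subgroup $S$ to $[\mathbb Q[(G\times C_p)/S]]$, $K(G\times C_p)=\ker f$, and $K(G,C_p)=K(G\times C_p)\cap B(G,C_p)$ is the module of relative Brauer relations. *)

From HB Require Import structures.
From mathcomp Require Import all_boot all_order all_algebra all_fingroup all_solvable all_field all_character.
Set Implicit Arguments. Unset Strict Implicit. Unset Printing Implicit Defensive.
Import GRing.Theory Num.Theory.
Local Open Scope ring_scope.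

(* Ambient: G : {group gT}, C_p realised as a group C : {group cT} with #|C| = p.
   G x C_p is the group  setX G C  inside the product finGroupType gT * cT.
   An element of the Burnside ring B(G x C_p) is an integer-valued function on
   subsets of gT * cT supported on the subgroups of G x C (coefficient of each
   basis subgroup). *)

Definition burnside (aT : finGroupType) := {ffun {set aT} -> int}.

Definition bsub (aT : finGroupType) (S : {set aT}) : burnside aT :=
  [ffun A => ((A == S) : nat)%:Z].

Definition in_burnside (aT : finGroupType) (X : {set aT}) (x : burnside aT) :=
  forall A, x A != 0 -> group_set A && (A \subset X).

Definition graph (gT cT : finGroupType) (K : {set gT}) (rho : gT -> cT)
  : {set (gT * cT)%type} := [set (k, rho k) | k in K].

Definition is_hom (gT cT : finGroupType) (K : {set gT}) (C : {set cT})
  (rho : gT -> cT) :=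
  [forall x in K, forall y in K, rho (x * y)%g == (rho x * rho y)%g]
  && (rho @: K \subset C).

Definition is_graph (gT cT : finGroupType) (G : {set gT}) (C : {set cT})
  (A : {set (gT * cT)%type}) :=
  exists (K : {group gT}) (rho : gT -> cT),
    [/\ K \subset G, is_hom K C rho & A = graph K rho].

(* x lies in B(G, C_p): in the span of the graphs, i.e. supported on graphs *)
Definition in_rel_burnside (gT cT : finGroupType) (G : {set gT}) (C : {set cT})
  (x : burnside (gT * cT)%type) := forall A, x A != 0 -> is_graph G C A.

(* f : B(X) -> R_Q(X), S |-> [Q[X/S]], recorded via the character of the
   permutation module Q[X/S], namely 'Ind[X] 1_S (characters determine classes
   in R_Q(X)). *)
Definition fmap (aT : finGroupType) (X : {group aT}) (x : burnside aT) : 'CF(X) :=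
  \sum_(S : {group aT} | S \subset X) (x S)%:~R *: 'Ind[X] (1 : 'CF(S)).

(* relative Brauer relations K(G, C_p) = K(G x C_p) ∩ B(G, C_p) *)
Definition in_rel_brauer (gT cT : finGroupType) (G : {group gT}) (C : {group cT})
  (x : burnside (gT * cT)%type) :=
  [/\ in_burnside (setX G C) x, in_rel_burnside G C x & fmap (setX_group G C) x = 0].

(* index pairs (G', rho): G' <= G non-cyclic, rho : G' -> C a homomorphism;
   rho is stored as a finite function normalised to be 1 outside G', so that
   pairs correspond bijectively to (G', hom G' -> C_p). *)
Definition theta_index (gT cT : finGroupType) (G : {set gT}) (C : {set cT})
  (i : ({group gT} * {ffun gT -> cT})%type) :=
  [&& i.1 \subset G, ~~ cyclic i.1, is_hom i.1 C i.2
    & [forall x, (x \notin i.1) ==> (i.2 x == 1%g)]].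

Definition Theta (gT cT : finGroupType) (p : nat) (Lc : {group gT} -> {group gT})
  (Gp : {group gT}) (rho : gT -> cT) : burnside (gT * cT)%type :=
  bsub (graph (Lc Gp) rho)
  - \sum_(Cp : {group gT} | [&& Lc Gp \proper Cp, Cp \proper Gp & (#|Cp : Lc Gp|%g == p)%N])
      bsub (graph Cp rho)
  + bsub (graph Gp rho) *+ p.

(* Since G x C_p is abelian, f sends a subgroup S to |G x C_p : S| times the
   indicator function of S, so x is a Brauer relation iff for every g the sum of
   x_S / |S| over the subgroups S containing g vanishes.  For Theta_{G',rho} at
   g = (k, rho k) with k in G' this sum vanishes because exactly 1 + p [k in L'] of
   the p + 1 subgroups C' contain k.
   Each Theta_{G',rho} has coefficient p on G' x rho and is otherwise supported on
   graphs of smaller subgroups.  This triangularity gives linear independence, and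
   it lets one cancel, after multiplication by p, the terms of a relation over the
   largest non-cyclic subgroups.  What remains is a relation supported on graphs
   over cyclic subgroups; it is zero, because a maximal term K x rho with K = <k>
   is the only term containing (k, rho k), so that the value of f at (k, rho k) is a
   nonzero multiple of its coefficient. *)

From HB Require Import structures.
From mathcomp Require Import all_boot all_order all_algebra all_fingroup all_solvable all_field all_character.
From mathcomp Require Import zify ring.
Import GRing.Theory Num.Theory.
Local Open Scope ring_scope.
Set Implicit Arguments. Unset Strict Implicit. Unset Printing Implicit Defensive.

Section Graphs.
Variables (gT cT : finGroupType) (C : {set cT}).
Implicit Types (K H : {set gT}) (rho : gT -> cT).

Lemma mem_graph K rho a : (a \in graph K rho) = (a.1 \in K) && (a.2 == rho a.1).
Proof.
apply/imsetP/andP => [[k kK ->]|[aK /eqP e]]; first by split.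
by exists a.1 => //; case: a e aK => /= ? ? ->.
Qed.

Lemma card_graph K rho : #|graph K rho| = #|K|.
Proof. by rewrite card_imset // => x y /(congr1 fst). Qed.

Lemma imset_fst_graph K rho : [set a.1 | a in graph K rho] = K.
Proof.
apply/setP=> k; apply/imsetP/idP => [[a]|kK]; first by rewrite mem_graph => /andP[? _] ->.
by exists (k, rho k); rewrite ?mem_graph ?eqxx ?andbT.
Qed.

Lemma is_homM K rho x y : is_hom K C rho -> x \in K -> y \in K ->
  rho (x * y)%g = (rho x * rho y)%g.
Proof. by case/andP=> /forall_inP hM _ xK yK; apply/eqP/(forall_inP (hM x xK)). Qed.

Lemma is_homS K H rho : H \subset K -> is_hom K C rho -> is_hom H C rho.
Proof.
move=> sHK /andP[/forall_inP hM sC]; apply/andP; split; last exact: subset_trans (imsetS _ sHK) sC.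
apply/forall_inP=> x xH; apply/forall_inP=> y yH.
exact: (forall_inP (hM x (subsetP sHK x xH))) y (subsetP sHK y yH).
Qed.

Lemma eq_in_is_hom (K : {group gT}) rho rho' :
  {in K, rho =1 rho'} -> is_hom K C rho -> is_hom K C rho'.
Proof.
move=> eq_rho /andP[/forall_inP hM sC]; apply/andP; split; last by rewrite -(eq_in_imset eq_rho).
apply/forall_inP=> x xK; apply/forall_inP=> y yK.
by rewrite -!eq_rho ?groupM //; apply: (forall_inP (hM x xK)).
Qed.

Lemma is_hom1 (K : {group gT}) rho : is_hom K C rho -> rho 1%g = 1%g.
Proof. by move=> hK; apply: (mulgI (rho 1%g)); rewrite -(is_homM hK) ?mulg1. Qed.

Lemma is_homX (K : {group gT}) rho x n : is_hom K C rho -> x \in K ->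
  rho (x ^+ n)%g = (rho x ^+ n)%g.
Proof.
move=> hK xK; elim: n => [|n IHn]; first exact: is_hom1 hK.
by rewrite !expgS (is_homM hK) ?groupX // IHn.
Qed.

Lemma group_set_graph (K : {group gT}) rho : is_hom K C rho -> group_set (graph K rho).
Proof.
move=> hK; apply/group_setP; split; first by rewrite mem_graph group1 (is_hom1 hK) /=.
move=> [x a] [y b]; rewrite !mem_graph /= => /andP[xK /eqP->] /andP[yK /eqP->].
by rewrite groupM //= (is_homM hK).
Qed.

Lemma graph_subX K (G : {set gT}) rho : K \subset G -> is_hom K C rho ->
  graph K rho \subset setX G C.
Proof.
move=> sKG /andP[_ sC]; apply/subsetP=> a; rewrite mem_graph inE => /andP[aK /eqP->].
by rewrite (subsetP sKG _ aK) (subsetP sC) ?imset_f.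
Qed.

Lemma expg_pair (x : gT) (c : cT) n : ((x, c) ^+ n)%g = (x ^+ n, c ^+ n)%g.
Proof. by elim: n => [|n IHn] //; rewrite !expgS IHn. Qed.

Lemma graph_sub_cycle (k : gT) rho : is_hom <[k]>%g C rho ->
  graph <[k]>%g rho \subset <[(k, rho k)]>%g.
Proof.
move=> hK; apply/subsetP=> -[x a]; rewrite mem_graph => /andP[/cycleP[n /= ->] /eqP->].
by rewrite (is_homX n hK (cycle_id k)) -expg_pair mem_cycle.
Qed.

End Graphs.

Lemma expg_prime_Zp (p : nat) (x : 'Z_p) : prime p -> (x ^+ p)%g = 1%g.
Proof.
move=> p_pr; have := expg_cardG (in_setT x).
by rewrite cardsT card_ord Zp_cast ?prime_gt1.
Qed.

Section IndexPOvergroups.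
Variables (gT : finGroupType) (p : nat) (K L : {group gT}).
Hypotheses (p_pr : prime p) (abK : abelian K) (sLK : L \subset K)
  (isoKL : (K / L)%g \isog [set: ('Z_p * 'Z_p)%type]).

Local Notation index_p_over C := [&& L \proper C, C \proper K & #|C : L|%g == p].

Let nLK : K \subset 'N(L)%g := sub_abelian_norm abK sLK.
Let p_gt1 : (1 < p)%N := prime_gt1 p_pr.

Lemma card_Zp2_quotient : #|K| = (p * p * #|L|)%N.
Proof.
rewrite -(Lagrange sLK) -card_quotient // (card_isog isoKL) cardsT card_prod.
by rewrite card_ord Zp_cast // mulnC.
Qed.

Lemma expg_prime_mem_Zp2_quotient k : k \in K -> (k ^+ p)%g \in L.
Proof.
move=> kK; have kN := subsetP nLK k kK.
apply: coset_idr; first by rewrite groupX.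
case/isogP: isoKL => f injf _; have kLQ : coset L k \in (K / L)%g by apply: mem_quotient.
rewrite morphX //; apply: (injmP injf); rewrite ?groupX // morph1 morphX //.
by case: (f _) => a b; rewrite expg_pair !expg_prime_Zp.
Qed.

Lemma card_index_p_over (C : {group gT}) : index_p_over C -> #|C| = (#|L| * p)%N.
Proof. by case/and3P=> /proper_sub sLC _ /eqP <-; rewrite Lagrange. Qed.

Lemma index_p_over_unique k : k \in K -> k \notin L ->
  exists2 D : {group gT}, index_p_over D /\ k \in D &
    forall C : {group gT}, index_p_over C -> k \in C -> C = D.
Proof.
move=> kK kL; have kN := subsetP nLK k kK.
have ord_k : #[coset L k]%g = p.
  have : (#[coset L k]%g %| p)%N.
    by rewrite order_dvdn -morphX //= coset_id // expg_prime_mem_Zp2_quotient.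
  case/primeP: p_pr => _ /[apply] /orP[|/eqP //].
  by rewrite order_eq1 => /eqP /(coset_idr kN); rewrite (negPf kL).
set D := (L <*> <[k]>)%G.
have nLk : <[k]>%g \subset 'N(L)%g by rewrite cycle_subG.
have iDL : #|D : L|%g = p.
  by rewrite -card_quotient ?join_subG ?normG // quotientYidl // quotient_cycle // -orderE.
have cardD : #|D| = (#|L| * p)%N by rewrite -iDL Lagrange // joing_subl.
have kD : k \in D by rewrite mem_gen // inE cycle_id orbT.
have sDK : D \subset K by rewrite join_subG sLK cycle_subG.
exists D.
  split=> //; rewrite iDL eqxx andbT !properEcard joing_subl sDK cardD card_Zp2_quotient.
  by have := cardG_gt0 L; nia.
move=> C PC kC; apply/val_inj/eqP; rewrite eq_sym eqEcard card_index_p_over // cardD leqnn.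
by case/and3P: PC => /proper_sub sLC _ _; rewrite join_subG sLC cycle_subG kC.
Qed.

Lemma sum_index_p_over_mem_notin k : k \in K -> k \notin L ->
  (\sum_(C : {group gT} | index_p_over C) (k \in C) = 1)%N.
Proof.
move=> kK kL; have [D [PD kD] uniqD] := index_p_over_unique kK kL.
rewrite (bigD1 D) //= kD big1 // => C /andP[PC neCD].
by apply/eqP; rewrite eqb0; apply: contra neCD => kC; rewrite (uniqD C).
Qed.

Lemma card_index_p_over_all : (\sum_(C : {group gT} | index_p_over C) 1 = p.+1)%N.
Proof.
(* Double counting of the pairs (k, C) with k in C :\: L. *)
set N := (\sum_(C | _) 1)%N.
have per_C : (\sum_(k in K :\: L) \sum_(C : {group gT} | index_p_over C) (k \in C)
              = N * (#|L| * p - #|L|))%N.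
  rewrite exchange_big big_distrl /=; apply: eq_bigr => C PC; rewrite mul1n.
  have [sLC sCK] : L \subset C /\ C \subset K.
    by case/and3P: PC => /proper_sub ? /proper_sub ? _.
  rewrite -(card_index_p_over PC) -[in RHS](setIidPr sLC) -cardsD -sum1_card.
  rewrite big_mkcond [RHS]big_mkcond /=.
  apply: eq_bigr => k _; rewrite !inE.
  have [kC|kC] := boolP (k \in C); last by rewrite andbF; case: ifP.
  by rewrite (subsetP sCK k kC).
have per_k : (\sum_(k in K :\: L) \sum_(C : {group gT} | index_p_over C) (k \in C)
              = p * p * #|L| - #|L|)%N.
  rewrite (eq_bigr (fun _ => 1%N)) => [|k /setDP[kK kL]]; last exact: sum_index_p_over_mem_notin.
  by rewrite sum1_card cardsD (setIidPr sLK) card_Zp2_quotient.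
move: per_C; rewrite per_k; have := cardG_gt0 L; move: #|L| => a a_gt0 e.
have pos : (0 < a * p.-1)%N by rewrite muln_gt0 a_gt0 -subn1 subn_gt0.
have : (N * (a * p.-1) = p.+1 * (a * p.-1))%N by rewrite -subn1; nia.
by move/eqP; rewrite eqn_pmul2r // => /eqP.
Qed.

Lemma sum_index_p_over_mem k : k \in K ->
  (\sum_(C : {group gT} | index_p_over C) (k \in C) = 1 + p * (k \in L))%N.
Proof.
move=> kK; case: (boolP (k \in L)) => kL; last by rewrite muln0 addn0 sum_index_p_over_mem_notin.
rewrite muln1 add1n -card_index_p_over_all; apply: eq_bigr => C.
by case/and3P=> /proper_sub /subsetP/(_ k kL) ->.
Qed.

End IndexPOvergroups.

Section PermutationCharacter.
Variables (aT : finGroupType) (X : {group aT}).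

Lemma fmap_is_zmod_morphism : zmod_morphism (fmap X).
Proof.
move=> x y; rewrite -sumrB; apply: eq_bigr => S _.
by rewrite !ffunE intrD intrN scalerBl.
Qed.

HB.instance Definition _ := GRing.isZmodMorphism.Build _ _ (fmap X) fmap_is_zmod_morphism.

Lemma fmap0 : fmap X 0 = 0. Proof. exact: raddf0. Qed.
Lemma fmapD : {morph fmap X : x y / x + y}. Proof. exact: raddfD. Qed.
Lemma fmapN : {morph fmap X : x / - x}. Proof. exact: raddfN. Qed.
Lemma fmapMn n : {morph fmap X : x / x *+ n}. Proof. exact: raddfMn. Qed.
Lemma fmapMz c : {morph fmap X : x / x *~ c}. Proof. exact: raddfMz. Qed.
Lemma fmap_sum I (r : seq I) (P : pred I) (F : I -> burnside aT) :
  fmap X (\sum_(i <- r | P i) F i) = \sum_(i <- r | P i) fmap X (F i).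
Proof. exact: raddf_sum. Qed.

Hypothesis abX : abelian X.

Lemma cfInd1_abelianE (S : {group aT}) g : S \subset X ->
  ('Ind[X] (1 : 'CF(S))) g = #|X|%:R / #|S|%:R * (g \in S)%:R.
Proof.
move=> sSX; have nSX : (S <| X)%g by rewrite -sub_abelian_normal.
rewrite cfInd_cfun1 // cfunE cfuniE // -(Lagrange sSX) natrM [_ * _ / _]mulrAC divff ?mul1r //.
by rewrite pnatr_eq0 -lt0n cardG_gt0.
Qed.

Lemma fmapE x g : fmap X x g =
  \sum_(S : {group aT} | S \subset X) (x S)%:~R * (#|X|%:R / #|S|%:R * (g \in S)%:R).
Proof.
by rewrite sum_cfunE; apply: eq_bigr => S sSX; rewrite cfunE cfInd1_abelianE.
Qed.

Lemma fmap_bsubE (A : {set aT}) g : group_set A -> A \subset X ->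
  fmap X (bsub A) g = #|X|%:R / #|A|%:R * (g \in A)%:R.
Proof.
move=> gA sAX; rewrite fmapE (bigD1 (Group gA)) //= big1 ?addr0 => [|S /andP[_ neSA]].
  by rewrite ffunE eqxx mul1r.
rewrite ffunE; suff /negPf-> : gval S != A by rewrite mul0r.
by apply: contra neSA => /eqP eSA; apply/eqP/val_inj.
Qed.

End PermutationCharacter.

Definition supported (aT : finGroupType) (Q : {set aT} -> Prop) (x : burnside aT) :=
  forall A, x A != 0 -> Q A.

Section Supports.
Variables (aT : finGroupType) (Q : {set aT} -> Prop).
Implicit Types x y : burnside aT.

Lemma supported0 : supported Q 0.
Proof. by move=> A; rewrite ffunE eqxx. Qed.

Lemma supportedD x y : supported Q x -> supported Q y -> supported Q (x + y).
Proof.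
move=> Qx Qy A; rewrite ffunE; have [xA0|/Qx //] := eqVneq (x A) 0.
by rewrite xA0 add0r => /Qy.
Qed.

Lemma supportedN x : supported Q x -> supported Q (- x).
Proof. by move=> Qx A; rewrite ffunE oppr_eq0 => /Qx. Qed.

Lemma supportedMz x c : supported Q x -> supported Q (x *~ c).
Proof.
move=> Qx A; rewrite ffunMzE; have [->|/Qx //] := eqVneq (x A) 0.
by rewrite mul0rz eqxx.
Qed.

Lemma supported_sum I (r : seq I) (P : pred I) (F : I -> burnside aT) :
  (forall i, P i -> supported Q (F i)) -> supported Q (\sum_(i <- r | P i) F i).
Proof. exact: (big_ind (supported Q) supported0 supportedD). Qed.

Lemma supported_bsub (A : {set aT}) : Q A -> supported Q (bsub A).
Proof. by move=> QA B; rewrite ffunE; have [->|] := eqVneq B A. Qed.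

End Supports.

Section RelativeBrauer.
Variables (gT cT : finGroupType) (G : {group gT}) (C : {group cT}).
Implicit Types x y : burnside (gT * cT)%type.

Lemma rel_brauer0 : in_rel_brauer G C 0.
Proof. by split; [apply: supported0 | apply: supported0 | rewrite fmap0]. Qed.

Lemma rel_brauerD x y :
  in_rel_brauer G C x -> in_rel_brauer G C y -> in_rel_brauer G C (x + y).
Proof.
case=> Bx Rx fx [By Ry fy].
by split; [apply: supportedD | apply: supportedD | rewrite fmapD fx fy addr0].
Qed.

Lemma rel_brauerN x : in_rel_brauer G C x -> in_rel_brauer G C (- x).
Proof.
by case=> Bx Rx fx; split; [apply: supportedN | apply: supportedN | rewrite fmapN fx oppr0].
Qed.

Lemma rel_brauerMz x c : in_rel_brauer G C x -> in_rel_brauer G C (x *~ c).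
Proof.
case=> Bx Rx fx.
by split; [apply: supportedMz | apply: supportedMz | rewrite fmapMz fx mul0rz].
Qed.

Lemma rel_brauer_sum I (r : seq I) (P : pred I) (F : I -> burnside (gT * cT)%type) :
  (forall i, P i -> in_rel_brauer G C (F i)) -> in_rel_brauer G C (\sum_(i <- r | P i) F i).
Proof. exact: (big_ind (in_rel_brauer G C) rel_brauer0 rel_brauerD). Qed.

Lemma rel_brauer_cyclic_eq0 y : abelian (setX G C) -> in_rel_brauer G C y ->
  (forall A, y A != 0 -> cyclic [set a.1 | a in A]) -> y = 0.
Proof.
move=> abGC [By Ry fy] cyc_y; apply/ffunP=> A0; rewrite ffunE; apply/eqP/contraT => yA0.
have [A yA maxA] := @arg_maxnP _ A0 [pred A | y A != 0] (fun A => #|A|) yA0.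
have /andP[gA sAX] := By A yA; have [K [r [sKG hK eA]]] := Ry A yA.
have /cyclicP[k eK] : cyclic K by rewrite -(imset_fst_graph K r) -eA cyc_y.
pose g := (k, r k); have gA_g : g \in A by rewrite eA mem_graph eK cycle_id /=.
have sAg : A \subset <[g]>%g by rewrite eA eK (graph_sub_cycle (C := C)) // -eK.
have := congr1 (fun f : 'CF(_) => f g) fy; rewrite cfunE fmapE //.
rewrite (bigD1 (Group gA)) //= big1 ?addr0 => [|S /andP[_ neSA]].
  have card_neq0 (B : {set gT * cT}) : g \in B -> (#|B| == 0%N) = false.
    by move=> gB; apply/negbTE; rewrite cards_eq0; apply/set0Pn; exists g.
  rewrite gA_g mulr1 => /eqP; rewrite !mulf_eq0 intr_eq0 (negPf yA) invr_eq0 !pnatr_eq0.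
  by rewrite !card_neq0 // (subsetP sAX).
have [->|ySA] := eqVneq (y S) 0; first by rewrite mul0r.
have [gS|_] := boolP (g \in S); last by rewrite !mulr0.
have sAS : A \subset S by apply: subset_trans sAg _; rewrite cycle_subG.
case/eqP: neSA; apply/val_inj/eqP; rewrite /= eq_sym eqEcard sAS.
exact: (maxA (gval S)).
Qed.

End RelativeBrauer.

Lemma abelian_setX (gT cT : finGroupType) (G : {group gT}) (C : {group cT}) :
  abelian G -> abelian C -> abelian (setX G C).
Proof.
move=> abG abC; apply/centsP=> -[x a] /setXP[xG aC] [y b] /setXP[yG bC].
change ((x * y, a * b) = (y * x, b * a))%g.
by rewrite (centsP abG x xG y yG) (centsP abC a aC b bC).
Qed.

Section ThetaElements.
Variables (p : nat) (gT cT : finGroupType) (Lc : {group gT} -> {group gT}).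

Lemma supported_Theta (Q : {set gT * cT} -> Prop) (K : {group gT}) (rho : gT -> cT) :
  Lc K \subset K -> (forall H : {group gT}, H \subset K -> Q (graph H rho)) ->
  supported Q (Theta p Lc K rho).
Proof.
move=> sLK QK; apply: supportedD.
  apply: supportedD; first exact: supported_bsub (QK _ sLK).
  apply: supportedN; apply: supported_sum => H /and3P[_ /proper_sub sHK _].
  exact: supported_bsub (QK _ sHK).
by rewrite -mulrz_nat; apply: supportedMz; apply: supported_bsub (QK _ _).
Qed.

Lemma ThetaE_large (K : {group gT}) (rho : gT -> cT) (A : {set gT * cT}) :
  Lc K \proper K -> (#|K| <= #|A|)%N ->
  Theta p Lc K rho A = ((A == graph K rho) : nat)%:Z *+ p.
Proof.
move=> pLK leKA; have neqA (H : {group gT}) : H \proper K -> (A == graph H rho) = false.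
  move=> pHK; apply/negbTE/eqP => eA.
  by move: (proper_card pHK); rewrite -(card_graph H rho) -eA ltnNge leKA.
rewrite /Theta !ffunE sum_ffunE ffunMnE !ffunE (neqA (Lc K)) // big1 ?subr0 ?add0r // => H.
by case/and3P=> _ pHK _; rewrite ffunE neqA.
Qed.

End ThetaElements.

Section ThetaIndex.
Variables (gT cT : finGroupType) (G : {set gT}) (C : {set cT}).
Implicit Types i j : ({group gT} * {ffun gT -> cT})%type.

Lemma theta_index_graph_inj i j : theta_index G C i -> theta_index G C j ->
  graph i.1 i.2 = graph j.1 j.2 -> i = j.
Proof.
case: i j => [K r] [K' r'] /and4P[_ _ _ /forall_inP r1] /and4P[_ _ _ /forall_inP r'1].
move=> /= eqKr.
have eqK : K = K' by apply/val_inj; rewrite /= -(imset_fst_graph K r) eqKr imset_fst_graph.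
subst K'; congr (_, _); apply/ffunP => x; have [xK|xK] := boolP (x \in K).
  by have := mem_graph K r' (x, r x); rewrite -eqKr mem_graph xK eqxx => /esym/eqP.
by rewrite (eqP (r1 x xK)) (eqP (r'1 x xK)).
Qed.

Lemma theta_index_of_hom (K : {group gT}) (rho : gT -> cT) :
  K \subset G -> ~~ cyclic K -> is_hom K C rho ->
  exists i, [/\ theta_index G C i, i.1 = K & graph i.1 i.2 = graph K rho].
Proof.
move=> sKG ncK hK; pose rho1 := [ffun x => if x \in K then rho x else 1%g].
have eq_rho : {in K, rho =1 rho1} by move=> x xK; rewrite ffunE xK.
exists (K, rho1); split=> //=; last by apply/eq_in_imset => x xK /=; rewrite eq_rho.
rewrite /theta_index sKG ncK (eq_in_is_hom eq_rho hK).
by apply/forall_inP => x xK; rewrite ffunE (negPf xK).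
Qed.

End ThetaIndex.

Section ThetaBasis.
Variables (p : nat) (gT cT : finGroupType) (G : {group gT}) (C : {group cT}).
Variable Lc : {group gT} -> {group gT}.
Hypotheses (p_pr : prime p) (abG : abelian G) (abC : abelian C).
Hypothesis Lc_Zp2 : forall K : {group gT}, K \subset G -> ~~ cyclic K ->
  Lc K \proper K /\ (K / Lc K)%g \isog [set: ('Z_p * 'Z_p)%type].

Let abGC : abelian (setX G C) := abelian_setX abG abC.

Lemma fmap_Theta (K : {group gT}) (rho : gT -> cT) :
  K \subset G -> ~~ cyclic K -> is_hom K C rho ->
  fmap (setX_group G C) (Theta p Lc K rho) = 0.
Proof.
move=> sKG ncK hK; have [pLK isoK] := Lc_Zp2 sKG ncK.
have sLK := proper_sub pLK; have abK := abelianS sKG abG.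
have fmap_graph (H : {group gT}) k c : H \subset K ->
    fmap (setX_group G C) (bsub (graph H rho)) (k, c)
    = #|setX G C|%:R / #|H|%:R * ((k \in H) && (c == rho k))%:R.
  move=> sHK; have hH := is_homS sHK hK; have sHG := subset_trans sHK sKG.
  by rewrite fmap_bsubE ?card_graph ?mem_graph ?(group_set_graph hH) ?(graph_subX sHG hH).
apply/cfunP=> -[k c]; rewrite [RHS]cfunE /Theta !fmapD fmapN fmapMn -scaler_nat fmap_sum.
rewrite !cfunE sum_cfunE !fmap_graph // (eq_bigr (fun H : {group gT} =>
  #|setX G C|%:R / (#|Lc K| * p)%:R * ((k \in H) && (c == rho k))%:R)) => [|H PH]; last first.
  case/and3P: (PH) => _ /proper_sub sHK _.
  by rewrite fmap_graph // (card_index_p_over PH).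
have [_|_] := eqVneq c (rho k); last first.
  by rewrite big1 => [|H _]; rewrite ?andbF /= ?mulr0n ?mulr0 ?subr0 ?addr0.
rewrite !andbT; have [kK|kK] := boolP (k \in K); last first.
  rewrite (contraNF (subsetP sLK k)) // big1 => [|H]; rewrite /= ?mulr0n ?mulr0 ?subr0 ?addr0 //.
  by case/and3P=> _ /proper_sub sHK _; rewrite (contraNF (subsetP sHK k)) //= mulr0n mulr0.
under eq_bigr do rewrite andbT.
rewrite -mulr_sumr -natr_sum sum_index_p_over_mem // (card_Zp2_quotient p_pr abK sLK isoK) mulr1.
have l0 : (#|Lc K|%:R : algC) != 0 by rewrite pnatr_eq0 -lt0n cardG_gt0.
have p0 : (p%:R : algC) != 0 by rewrite pnatr_eq0 -lt0n prime_gt0.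
by rewrite natrD !natrM; field; rewrite l0 p0.
Qed.

Lemma Theta_rel_brauer (K : {group gT}) (rho : gT -> cT) :
  K \subset G -> ~~ cyclic K -> is_hom K C rho -> in_rel_brauer G C (Theta p Lc K rho).
Proof.
move=> sKG ncK hK; have sLK := proper_sub (Lc_Zp2 sKG ncK).1.
have graphH (H : {group gT}) : H \subset K -> H \subset G /\ is_hom H C rho.
  by move=> sHK; split; [apply: subset_trans sKG | apply: is_homS hK].
split; last exact: fmap_Theta.
  apply: (supported_Theta (Q := fun A => group_set A && (A \subset setX G C))) sLK _.
  by move=> H /graphH[sHG hH]; rewrite (group_set_graph hH) graph_subX.
apply: (supported_Theta (Q := is_graph G C)) sLK _.
by move=> H /graphH[sHG hH]; exists H, rho.
Qed.

Local Notation Theta_ i := (Theta p Lc i.1 i.2).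

Lemma theta_index_Lc_proper i : theta_index G C i -> Lc i.1 \proper i.1.
Proof. by case/and4P=> sKG ncK _ _; case: (Lc_Zp2 sKG ncK). Qed.

Lemma Theta_free (c : ({group gT} * {ffun gT -> cT})%type -> int) :
  \sum_(i | theta_index G C i) Theta_ i *~ c i = 0 ->
  forall i, theta_index G C i -> c i = 0.
Proof.
move=> sum_eq0 i0 ti0; apply/eqP/contraT => ci0.
pose P := [pred i | theta_index G C i && (c i != 0)].
have [i /andP[ti ci] maxi] := @arg_maxnP _ i0 P (fun i => #|i.1|) (introT andP (conj ti0 ci0)).
have := congr1 (fun x : burnside _ => x (graph i.1 i.2)) sum_eq0 => /=.
rewrite sum_ffunE ffunE (bigD1 i) //= big1 ?addr0 => [|j /andP[tj neji]].
  rewrite ffunMzE ThetaE_large ?card_graph ?eqxx ?theta_index_Lc_proper //.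
  by move/eqP; rewrite mulrzz mulf_eq0 (negPf ci) orbF mulrn_eq0 (gtn_eqF (prime_gt0 p_pr)).
rewrite ffunMzE; have [->|cj] := eqVneq (c j) 0; first by rewrite mulr0z.
rewrite ThetaE_large ?card_graph ?theta_index_Lc_proper //; last by apply: maxi; rewrite inE tj.
suff /negPf-> : graph i.1 i.2 != graph j.1 j.2 by rewrite mul0rn mul0rz.
by apply: contra neji => /eqP eq_ij; rewrite (theta_index_graph_inj tj ti (esym eq_ij)).
Qed.

Definition Theta_layer n (y : burnside (gT * cT)%type) :=
  \sum_(i | theta_index G C i && (#|i.1| == n)) Theta_ i *~ y (graph i.1 i.2).

Lemma rel_brauer_Theta_layer n (y : burnside (gT * cT)%type) :
  in_rel_brauer G C (Theta_layer n y).
Proof.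
apply: rel_brauer_sum => i /andP[/and4P[sKG ncK hK _] _].
exact/rel_brauerMz/Theta_rel_brauer.
Qed.

Lemma Theta_layerE n (y : burnside (gT * cT)%type) (K : {group gT}) (rho : gT -> cT) :
  K \subset G -> ~~ cyclic K -> is_hom K C rho -> (n <= #|K|)%N ->
  Theta_layer n y (graph K rho) = y (graph K rho) *+ p *+ (#|K| == n).
Proof.
move=> sKG ncK hK leKn; rewrite /Theta_layer sum_ffunE.
rewrite (eq_bigr (fun i : {group gT} * {ffun gT -> cT} =>
  ((graph K rho == graph i.1 i.2) : nat)%:Z *+ p *~ y (graph K rho)));
  last first.
  move=> i /andP[ti /eqP szi].
  rewrite ffunMzE ThetaE_large ?card_graph ?szi ?theta_index_Lc_proper //.
  by have [-> // | _] := eqVneq (graph K rho) (graph i.1 i.2); rewrite mul0rn !mul0rz.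
have [i0 [ti0 i0K gi0]] := theta_index_of_hom sKG ncK hK.
have [eqKn|neKn] := eqVneq #|K| n.
  rewrite (bigD1 i0) /=; last by rewrite ti0 i0K eqKn eqxx.
  rewrite gi0 eqxx big1 ?addr0 => [|j /andP[/andP[tj _] neji]]; first by rewrite mulrzz mulr_natl.
  suff /negPf-> : graph K rho != graph j.1 j.2 by rewrite mul0rn mul0rz.
  by apply: contra neji => /eqP eq_Kj; rewrite (theta_index_graph_inj tj ti0) // gi0 eq_Kj.
rewrite big1 // => j /andP[_ /eqP szj].
suff /negPf-> : graph K rho != graph j.1 j.2 by rewrite mul0rn mul0rz.
by apply: contra neKn => /eqP eq_Kj; rewrite -(card_graph K rho) eq_Kj card_graph szj.
Qed.

Lemma Theta_layer_peel n (y : burnside (gT * cT)%type) :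
  in_rel_brauer G C y ->
  (forall A, y A != 0 -> ~~ cyclic [set a.1 | a in A] -> (#|A| <= n.+1)%N) ->
  in_rel_brauer G C (y *+ p - Theta_layer n.+1 y) /\
  (forall A, (y *+ p - Theta_layer n.+1 y) A != 0 -> ~~ cyclic [set a.1 | a in A] ->
     (#|A| <= n)%N).
Proof.
move=> rel_y le_y; set z := _ - _.
have rel_z : in_rel_brauer G C z.
  apply: rel_brauerD; first by rewrite -mulrz_nat; apply: rel_brauerMz.
  exact/rel_brauerN/rel_brauer_Theta_layer.
split=> // A zA ncA; rewrite leqNgt; apply/negP => ltnA.
have [_ graph_z _] := rel_z; have [K [rho [sKG hK eA]]] := graph_z A zA.
have ncK : ~~ cyclic K by rewrite -(imset_fst_graph K rho) -eA.
have cardA : #|A| = #|K| by rewrite eA card_graph.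
have leKn : (n.+1 <= #|K|)%N by rewrite -cardA.
move: zA; rewrite /z !ffunE ffunMnE {2}eA Theta_layerE // -eA -cardA.
have [_|neAn] := eqVneq #|A| n.+1; first by rewrite mulr1n subrr eqxx.
have -> : y A = 0 by apply/eqP/contraT => /le_y/(_ ncA) leAn; move: neAn ltnA; lia.
by rewrite mul0rn subrr eqxx.
Qed.

Lemma Theta_span n (y : burnside (gT * cT)%type) : in_rel_brauer G C y ->
  (forall A, y A != 0 -> ~~ cyclic [set a.1 | a in A] -> (#|A| <= n)%N) ->
  exists (k : nat) (c : ({group gT} * {ffun gT -> cT})%type -> int),
    y *+ (p ^ k) = \sum_(i | theta_index G C i) Theta_ i *~ c i.
Proof.
elim: n y => [|n IHn] y rel_y le_y.
  exists 0%N, (fun=> 0); rewrite expn0 mulr1n big1 => [|i _]; last exact: mulr0z.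
  have [supp_y _ _] := rel_y.
  apply: (rel_brauer_cyclic_eq0 abGC rel_y) => A yA; apply: contraT => /(le_y A yA).
  have /andP[/group_setP[A1 _] _] := supp_y A yA.
  by rewrite leqn0 cards_eq0 => /eqP A0; rewrite A0 inE in A1.
have [rel_z le_z] := Theta_layer_peel rel_y le_y.
have [k [c eq_z]] := IHn _ rel_z le_z.
exists k.+1, (fun i => c i + (y (graph i.1 i.2) *+ p ^ k) *+ (#|i.1| == n.+1)).
rewrite expnS mulrnA -[y *+ p](subrK (Theta_layer n.+1 y)) mulrnDl eq_z.
under [RHS]eq_bigr do rewrite mulrzDr.
rewrite big_split /=; congr (_ + _).
rewrite /Theta_layer -sumrMnl big_mkcondr; apply: eq_bigr => i _.
case: (#|i.1| == n.+1); last by rewrite mulr0z.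
by rewrite mulr1n -mulrz_nat -mulrzA mulr_natr.
Qed.

End ThetaBasis.

Unset Implicit Arguments.

Theorem theorem5p5 (p : nat) (gT cT : finGroupType) (G : {group gT}) (C : {group cT})
  (Lc : {group gT} -> {group gT}) :
  prime p -> abelian G -> (p.-group G)%g -> #|C| = p ->
  (forall Gp : {group gT}, Gp \subset G -> ~~ cyclic Gp ->
     Lc Gp \proper Gp /\ (Gp / Lc Gp)%g \isog [set: ('Z_p * 'Z_p)%type]) ->
  [/\ (* each Theta_{G',rho} is a relative Brauer relation *)
      (forall i, theta_index G C i -> in_rel_brauer G C (Theta p Lc i.1 i.2)),
      (* the Theta's are linearly independent (over Z, equivalently over Z[1/p]) *)
      (forall c : ({group gT} * {ffun gT -> cT})%type -> int,
         \sum_(i | theta_index G C i) Theta p Lc i.1 i.2 *~ c i = 0 ->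
         forall i, theta_index G C i -> c i = 0)
    & (* they span K(G,C_p)[1/p]: every relation times a power of p is a Z-combination *)
      (forall x, in_rel_brauer G C x ->
         exists (k : nat) (c : ({group gT} * {ffun gT -> cT})%type -> int),
           x *+ (p ^ k) = \sum_(i | theta_index G C i) Theta p Lc i.1 i.2 *~ c i)].
Proof.
move=> p_pr abG _ cardC Lc_Zp2.
have abC : abelian C by rewrite cyclic_abelian // prime_cyclic ?cardC.
split.
- by case=> K rho /and4P[sKG ncK hK _]; apply: Theta_rel_brauer.
- exact: Theta_free.
- move=> x rel_x; apply: (Theta_span p_pr abG abC Lc_Zp2 (n := #|[set: gT * cT]|) rel_x).
  by move=> A _ _; apply/subset_leq_card/subsetT.
Qed.
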